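(* Let $T$ be a strongly connected tournament on $n$ vertices which has an edge $e$ from $u$ to $v$ such that every directed cycle of $T$ contains $e$. Then the vertices of $T$ can be labeled $v_1,\ldots,v_n$ so that $T=D_n$, $u=v_n$ and $v=v_1$, where $D_n$ is the tournament in which, for $1\le i<j\le n$ with $(i,j)\ne(1,n)$, the edge between $v_i$ and $v_j$ is directed from $v_i$ to $v_j$, and the edge between $v_1$ and $v_n$ is directed from $v_n$ to $v_1$.
   Context: A tournament is an orientation of a complete graph; it is strongly connected if for any two vertices there is a directed path from each to the other. *)

From mathcomp Require Import all_boot.
Set Implicit Arguments. Unset Strict Implicit. Unset Printing Implicit Defensive.

Definition tournament (T : finType) (E : rel T) : Prop :=
  (forall x, ~~ E x x) /\
  (forall x y, x != y -> E x y (+) E y x).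

Definition strongly_connected (T : finType) (E : rel T) : Prop :=
  forall x y, connect E x y.

Definition directed_cycle (T : finType) (E : rel T) (c : seq T) : Prop :=
  [/\ c != [::], uniq c & cycle E c].

Definition cycle_uses_edge (T : finType) (c : seq T) (u v : T) : Prop :=
  (u \in c) /\ next c u = v.

(* The tournament D_n, with vertices indexed 0..n-1 (v_{i+1} <-> index i):
   i -> j iff (i < j and (i,j) <> (0,n-1)), or (i,j) = (n-1,0). *)
Definition Dn (n i j : nat) : bool :=
  ((i < j) && ~~ ((i == 0) && (j == n.-1))) || ((i == n.-1) && (j == 0)).

From mathcomp Require Import all_boot.
Set Implicit Arguments. Unset Strict Implicit. Unset Printing Implicit Defensive.

(* Deleting the edge e = u -> v leaves a digraph R without directed cycles.
   Every E-walk can be rerouted inside R except where it crosses e, so by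
   strong connectivity every vertex is R-reachable from v and reaches u in R;
   in particular v and u are R-comparable, and as every other pair of vertices
   is joined by an edge of R, R-reachability is a linear order.  Listing the
   vertices in this order gives D_n: each edge goes forward, except e. *)

Section SortedEnum.

Variables (T : finType) (le : rel T) (x0 : T).
Hypotheses (le_total : total le) (le_trans : transitive le)
  (le_anti : antisymmetric le).

Let s := sort le (enum T).

Let le_refl : reflexive le.
Proof. by move=> x; rewrite -[le x x]orbb le_total. Qed.

Lemma size_sort_enum : size s = #|T|.
Proof. by rewrite size_sort cardT. Qed.

Lemma nth_sort_enum_eq i j : i < #|T| -> j < #|T| ->
  (nth x0 s i == nth x0 s j) = (i == j).
Proof.
by rewrite -size_sort_enum => ilt jlt; rewrite nth_uniq // sort_uniq enum_uniq.
Qed.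

Lemma nth_sort_enum_le i j : i < #|T| -> j < #|T| ->
  le (nth x0 s i) (nth x0 s j) = (i <= j).
Proof.
have sorted_s : sorted le s by apply: sort_sorted.
have mono k l : k < #|T| -> l < #|T| -> k <= l -> le (nth x0 s k) (nth x0 s l).
  by rewrite -size_sort_enum => klt llt; apply: sorted_leq_nth.
move=> ilt jlt; case: leqP => [le_ij | lt_ji]; first exact: mono.
apply/negP => le_sij; have /le_anti/eqP : le (nth x0 s i) (nth x0 s j) &&
    le (nth x0 s j) (nth x0 s i) by rewrite le_sij mono // ltnW.
by rewrite nth_sort_enum_eq // => /eqP eq_ij; rewrite eq_ij ltnn in lt_ji.
Qed.

Lemma nth_sort_enum_index x : exists2 i, i < #|T| & nth x0 s i = x.
Proof.
exists (index x s); last by rewrite nth_index // mem_sort mem_enum.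
by rewrite -size_sort_enum index_mem mem_sort mem_enum.
Qed.

Lemma nth_sort_enum_least m : (forall x, le m x) -> nth x0 s 0 = m.
Proof.
move=> le_m; have [i ilt mE] := nth_sort_enum_index m.
have T_gt0 : 0 < #|T| by apply: leq_ltn_trans ilt.
by apply: le_anti; rewrite le_m -mE nth_sort_enum_le.
Qed.

Lemma nth_sort_enum_greatest m : (forall x, le x m) -> nth x0 s #|T|.-1 = m.
Proof.
move=> le_m; have [i ilt mE] := nth_sort_enum_index m.
have lt_T : #|T|.-1 < #|T| by rewrite ltn_predL (leq_ltn_trans _ ilt).
apply: le_anti; rewrite le_m -mE nth_sort_enum_le //.
by rewrite -ltnS prednK // (leq_ltn_trans _ ilt).
Qed.

Lemma nth_sort_enum_eq_least m i : (forall x, le m x) -> i < #|T| ->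
  (nth x0 s i == m) = (i == 0).
Proof.
move=> le_m ilt; have T_gt0 : 0 < #|T| by apply: leq_ltn_trans ilt.
by rewrite -[m](nth_sort_enum_least le_m) nth_sort_enum_eq.
Qed.

Lemma nth_sort_enum_eq_greatest m i : (forall x, le x m) -> i < #|T| ->
  (nth x0 s i == m) = (i == #|T|.-1).
Proof.
move=> le_m ilt.
have lt_T : #|T|.-1 < #|T| by rewrite ltn_predL (leq_ltn_trans _ ilt).
by rewrite -[m](nth_sort_enum_greatest le_m) nth_sort_enum_eq.
Qed.

End SortedEnum.

Definition deledge (T : eqType) (E : rel T) (u v : T) : rel T :=
  fun x y => E x y && ~~ ((x == u) && (y == v)).
Arguments deledge [T] E u v x y /.

Lemma connect_deledge_from (T : finType) (E : rel T) (u v w : T) :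
  connect E v w -> connect (deledge E u v) v w.
Proof.
move=> /connectP [p + ->]; suff reach x : connect (deledge E u v) v x ->
    path E x p -> connect (deledge E u v) v (last x p) by apply/reach/connect0.
elim: p x => //= y p IHp x Rvx /andP [Exy Ep]; apply: IHp Ep.
have [/andP [_ /eqP ->]|not_uv] := boolP ((x == u) && (y == v)).
  exact: connect0.
by apply: connect_trans Rvx (connect1 _); rewrite /= Exy not_uv.
Qed.

Lemma connect_deledge_to (T : finType) (E : rel T) (u v w : T) :
  connect E w u -> connect (deledge E u v) w u.
Proof.
have revR : deledge [rel x y | E y x] v u =2 [rel x y | deledge E u v y x].
  by move=> x y; rewrite /= [(x == v) && _]andbC.
move=> /(etrans (connect_rev E u w))/(connect_deledge_from v).
by rewrite (eq_connect revR) connect_rev.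
Qed.

Section DeleteEdge.

Variables (T : finType) (E : rel T) (u v : T).
Hypothesis cycles_use_uv :
  forall c : seq T, directed_cycle E c -> cycle_uses_edge c u v.

Local Notation R := (deledge E u v).

(* A path y ~> x closed by the edge x -> y is shortened to a simple cycle,
   which must then use u -> v, an edge R does not have. *)
Lemma deledge_acyclic x y : R x y -> ~~ connect R y x.
Proof.
move=> Rxy; apply/negP => /connectP [p Rp lastp].
case: (shortenP Rp) lastp => q Rq uniq_q _ lastq.
have Rc : cycle R (y :: q) by rewrite /= rcons_path Rq -lastq Rxy.
have [u_c next_u] : cycle_uses_edge (y :: q) u v.
  by apply: cycles_use_uv; split => //; apply: sub_cycle Rc => a b /andP [].
by have := next_cycle Rc u_c; rewrite next_u /deledge /= !eqxx andbF.
Qed.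

Lemma connect_deledge_anti : antisymmetric (connect R).
Proof.
move=> x y /andP [/connectP [[|z p] //= /andP [Rxz Rp] ->] Ryx].
have Rzx : connect R z x by apply: connect_trans Ryx; apply/connectP; exists p.
by have := deledge_acyclic Rxz; rewrite Rzx.
Qed.

Hypotheses (E_tour : tournament E) (E_sc : strongly_connected E) (Euv : E u v).

Lemma deledge_total : total (connect R).
Proof.
have edge_comparable x y : E x y -> connect R x y || connect R y x.
  move=> Exy; have [/andP [/eqP -> /eqP ->]|not_uv] :=
    boolP ((x == u) && (y == v)); first by rewrite connect_deledge_from ?orbT.
  by rewrite connect1 //= Exy not_uv.
move=> x y; have [<-|neq_xy] := eqVneq x y; first by rewrite connect0.
have := E_tour.2 x y neq_xy; case Exy: (E x y) => /= Eyx.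
  exact: edge_comparable.
by rewrite orbC edge_comparable.
Qed.

Lemma tournament_edgeE x y :
  E x y = ((x != y) && connect R x y && ~~ ((x == v) && (y == u)))
          || ((x == u) && (y == v)).
Proof.
have [/andP [/eqP -> /eqP ->]|not_uv] := boolP ((x == u) && (y == v)).
  by rewrite Euv orbT.
have [E_irr E_xor] := E_tour; rewrite orbF.
have neq_uv : u != v by apply: contraTneq Euv => ->; apply: E_irr.
apply/idP/idP => [Exy | /andP [/andP [neq_xy Rxy] not_vu]].
  have Rxy : R x y by rewrite /= Exy not_uv.
  rewrite connect1 // andbT; apply/andP; split.
    by apply: contraTneq Exy => ->; apply: E_irr.
  apply/negP => /andP [/eqP exv /eqP eyu].
  by have := E_xor u v neq_uv; rewrite Euv -exv -eyu Exy.
apply/negPn/negP => nExy.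
have Eyx : E y x by have := E_xor x y neq_xy; rewrite (negbTE nExy).
have Ryx : R y x by rewrite /= Eyx [(y == u) && _]andbC not_vu.
by have := deledge_acyclic Ryx; rewrite Rxy.
Qed.

End DeleteEdge.

Theorem mainTheorem11 (T : finType) (E : rel T) (n : nat) (u v : T) :
  #|T| = n ->
  tournament E ->
  strongly_connected E ->
  E u v ->
  (forall c : seq T, directed_cycle E c -> cycle_uses_edge c u v) ->
  exists f : 'I_n -> T,
    [/\ bijective f,
        (forall i j : 'I_n, E (f i) (f j) = Dn n i j),
        (forall i : 'I_n, val i = n.-1 -> f i = u)
      & (forall i : 'I_n, val i = 0 -> f i = v)].
Proof.
move=> <- E_tour E_sc Euv cycles_use_uv.
set R := deledge E u v.
have R_total := deledge_total u v E_tour E_sc.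
have R_anti := connect_deledge_anti cycles_use_uv.
have R_trans := @connect_trans _ R.
pose f (i : 'I_#|T|) := nth v (sort (connect R) (enum T)) i.
have from_v x : connect R v x by apply/connect_deledge_from/E_sc.
have to_u x : connect R x u by apply/connect_deledge_to/E_sc.
have f_eq i j : (f i == f j) = (i == j :> nat) by apply: nth_sort_enum_eq.
have f_le i j : connect R (f i) (f j) = (i <= j).
  exact: nth_sort_enum_le _ R_total R_trans R_anti _ _ (ltn_ord i) (ltn_ord j).
have f_v i : (f i == v) = (i == 0 :> nat).
  exact: nth_sort_enum_eq_least _ R_total R_trans R_anti _ _ from_v (ltn_ord i).
have f_u i : (f i == u) = (i == #|T|.-1 :> nat).
  exact: nth_sort_enum_eq_greatest _ R_total R_trans R_anti _ _ to_u (ltn_ord i).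
exists f; split.
- apply: inj_card_bij; last by rewrite card_ord.
  by move=> i j /eqP; rewrite f_eq => /eqP /val_inj.
- move=> i j; rewrite (tournament_edgeE cycles_use_uv) //.
  by rewrite f_eq f_le !f_v !f_u -ltn_neqAle.
- by move=> i /eqP; rewrite -f_u => /eqP.
- by move=> i /eqP; rewrite -f_v => /eqP.
Qed.
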